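(* Let $(X,\tau)$ be a principal topological space, i.e. arbitrary intersections of open sets are open. The following are equivalent: (i) $(X,\tau)$ is pre-Hausdorff; (ii) $(X,\tau)$ is regular; (iii) $(X,\tau)$ has dimension $0$, i.e. has a basis consisting of clopen sets; (iv) the operator $\neg:\tau\to\tau$ defined by $\neg U = \operatorname{int}(X\setminus U)$ satisfies $\neg\neg U = U$ for every $U\in\tau$ (equivalently, the topos of sheaves on $X$ is Boolean).
   Context: A space is pre-Hausdorff ($T_{0,2}$) if any two points $a,b$ for which some open set contains exactly one of them (a $T_0$-separation) also have disjoint open neighbourhoods. ''Regular'' means: for every closed set $A$ and point $p\notin A$ there are disjoint open sets $U\ni p$ and $V\supseteq A$; points are not required to be closed. *)

From HB Require Import structures.
From mathcomp Require Import all_boot all_order.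
From mathcomp Require Import all_classical all_reals all_analysis.
Set Implicit Arguments. Unset Strict Implicit. Unset Printing Implicit Defensive.
Local Open Scope classical_set_scope.

Definition principal_space (T : topologicalType) : Prop :=
  forall F : set (set T), F `<=` open -> open (\bigcap_(U in F) U).

Definition pre_hausdorff (T : topologicalType) : Prop :=
  forall a b : T,
    (exists U : set T, open U /\ ((U a /\ ~ U b) \/ (U b /\ ~ U a))) ->
    exists U V : set T, [/\ open U, open V, U a, V b & U `&` V = set0].

(* Regular (no T_1 assumption), as in the paper. *)
Definition regular_paper (T : topologicalType) : Prop :=
  forall (A : set T) (p : T), closed A -> ~ A p ->
    exists U V : set T, [/\ open U, open V, U p, A `<=` V & U `&` V = set0].

Definition is_basis (T : topologicalType) (B : set (set T)) : Prop :=
  B `<=` open /\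
  forall U : set T, open U -> exists F : set (set T), F `<=` B /\ U = \bigcup_(V in F) V.

Definition dim_zero (T : topologicalType) : Prop :=
  exists B : set (set T), is_basis B /\ B `<=` clopen.

Definition neg_open (T : topologicalType) (U : set T) : set T := (~` U)°.

(* In a principal space every point x has a smallest open neighbourhood
   [minimal_nbhd x], and each of the four conditions is equivalent to the
   symmetry of the relation "y lies in the smallest neighbourhood of x".
   Symmetry means that the open sets are exactly the unions of the (then
   clopen) blocks [minimal_nbhd x]; conversely, a pair x, y with y in the
   neighbourhood of x but not x in that of y is T_0-separated yet cannot be
   separated by disjoint opens, violates regularity for the closed set
   [~` minimal_nbhd y], and yields an open set U with U <> ¬¬U. *)
From mathcomp Require Import all_boot all_order.
From mathcomp Require Import all_classical all_reals all_analysis.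
Local Open Scope classical_set_scope.

Definition minimal_nbhd (T : topologicalType) (x : T) : set T :=
  \bigcap_(U in [set U | open U /\ U x]) U.
Arguments minimal_nbhd {T}.

Definition minimal_nbhd_symmetric (T : topologicalType) : Prop :=
  forall x y : T, minimal_nbhd x y -> minimal_nbhd y x.

Section PrincipalSpace.

Variable T : topologicalType.
Hypothesis principalT : principal_space T.

Local Notation N := (@minimal_nbhd T).

Lemma minimal_nbhd_id (x : T) : N x x.
Proof. by move=> U []. Qed.

Lemma minimal_nbhd_sub (x : T) (U : set T) : open U -> U x -> N x `<=` U.
Proof. by move=> oU Ux y; apply. Qed.
Arguments minimal_nbhd_sub {x U} _ _ {t}.

Lemma open_minimal_nbhd (x : T) : open (N x).
Proof. by apply: principalT => U []. Qed.

Lemma minimal_nbhd_trans (x y : T) : N x y -> N y `<=` N x.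
Proof. by move=> Nxy; apply: minimal_nbhd_sub => //; apply: open_minimal_nbhd. Qed.

Lemma openP (A : set T) : open A <-> forall w, A w -> N w `<=` A.
Proof.
split; first by move=> oA w Aw; apply: minimal_nbhd_sub.
move=> NA; have -> : A = \bigcup_(w in A) N w.
  apply/seteqP; split=> [z Az|z [w Aw Nwz]]; last exact: NA Nwz.
  by exists z => //; apply: minimal_nbhd_id.
by apply: bigcup_open => w _; apply: open_minimal_nbhd.
Qed.

Lemma interior_minimal_nbhd (A : set T) (w : T) : A° w <-> N w `<=` A.
Proof.
split=> [Aw|NwA].
  apply: subset_trans (@interior_subset _ A).
  by apply: minimal_nbhd_sub => //; apply: open_interior.
have : N w `<=` A° by rewrite -open_subsetE //; apply: open_minimal_nbhd.
by apply; apply: minimal_nbhd_id.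
Qed.

Lemma minimal_nbhd_symmetric_closed :
  minimal_nbhd_symmetric T -> forall U : set T, open U -> closed U.
Proof.
move=> symN U oU; rewrite -openC; apply/openP => w nUw v Nwv Uv.
exact: nUw (minimal_nbhd_sub oU Uv (symN _ _ Nwv)).
Qed.

Lemma closed_minimal_nbhd_symmetric :
  (forall U : set T, open U -> closed U) -> minimal_nbhd_symmetric T.
Proof.
move=> clopenT x y Nxy; apply: contrapT => nNyx.
have oC : open (~` N y) := closed_openC (clopenT _ (open_minimal_nbhd y)).
have nNyy : ~ N y y := minimal_nbhd_sub oC nNyx Nxy.
exact: nNyy (minimal_nbhd_id y).
Qed.

Lemma minimal_nbhd_symmetricE :
  minimal_nbhd_symmetric T <-> forall U : set T, open U -> closed U.
Proof.
split; [exact: minimal_nbhd_symmetric_closed|exact: closed_minimal_nbhd_symmetric].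
Qed.

Lemma minimal_nbhd_symmetric_dim_zero : minimal_nbhd_symmetric T <-> dim_zero T.
Proof.
rewrite minimal_nbhd_symmetricE; split=> [clopenT|[B [[_ Bbasis] Bclopen]] U oU].
  exists open; split=> [|U oU]; last by split=> //; apply: clopenT.
  split=> // U oU; exists [set U]; split; last by rewrite bigcup_set1.
  by move=> V ->.
have [F [FB ->]] := Bbasis U oU.
rewrite -openC; apply/openP => w nUw v Nwv [V FV Vv].
have [_ cV] := Bclopen V (FB V FV).
have nVw : (~` V) w by move=> Vw; apply: nUw; exists V.
exact: (minimal_nbhd_sub (closed_openC cV) nVw Nwv).
Qed.

Lemma minimal_nbhd_symmetric_neg_openK :
  minimal_nbhd_symmetric T <->
  (forall U : set T, open U -> neg_open (neg_open U) = U).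
Proof.
split=> [symN U oU|negK x y Nxy].
  have oCU : open (~` U) := closed_openC (minimal_nbhd_symmetric_closed symN _ oU).
  by rewrite /neg_open (proj1 (interior_id _) oCU) setCK (proj1 (interior_id _) oU).
apply: contrapT => nNyx.
pose O := [set w | N x w /\ ~ N w x].
have oO : open O.
  apply/openP => w [Nxw nNwx] v Nwv; split; first exact: minimal_nbhd_trans Nwv.
  by move=> Nvx; apply: nNwx; apply: minimal_nbhd_trans Nwv _ Nvx.
have nOx : ~ O x by move=> [_]; apply; apply: minimal_nbhd_id.
(* each point of N x is in O or has y (a point of O) in its neighbourhood *)
apply: nOx; rewrite -(negK O oO) /neg_open.
apply/interior_minimal_nbhd => z Nxz /interior_minimal_nbhd NzO.
have [Nzx|nNzx] := pselect (N z x).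
  by apply: (NzO y) => //; apply: minimal_nbhd_trans Nzx _ Nxy.
exact: (NzO z (minimal_nbhd_id z)).
Qed.

Lemma minimal_nbhd_symmetric_pre_hausdorff :
  minimal_nbhd_symmetric T <-> pre_hausdorff T.
Proof.
split=> [symN a b [U [oU sepU]]|preH x y Nxy].
  exists (N a), (N b); split; try exact: open_minimal_nbhd; try exact: minimal_nbhd_id.
  rewrite -subset0 => z [Naz Nbz].
  have Nab : N a b by apply: minimal_nbhd_trans Naz _ (symN _ _ Nbz).
  case: sepU => [[Ua nUb]|[Ub nUa]]; first exact: nUb (minimal_nbhd_sub oU Ua Nab).
  exact: nUa (minimal_nbhd_sub oU Ub (symN _ _ Nab)).
apply: contrapT => nNyx.
have [U [V [oU oV Ux Vy UV0]]] : exists U V : set T,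
    [/\ open U, open V, U x, V y & U `&` V = set0].
  apply: preH; exists (N y); split; first exact: open_minimal_nbhd.
  by right; split => //; apply: minimal_nbhd_id.
have : (U `&` V) y by split => //; exact: (minimal_nbhd_sub oU Ux Nxy).
by rewrite UV0.
Qed.

Lemma minimal_nbhd_symmetric_regular : minimal_nbhd_symmetric T <-> regular_paper T.
Proof.
split=> [symN A p cA nAp|regT x y Nxy].
  exists (N p), (~` N p); split.
  - exact: open_minimal_nbhd.
  - exact: closed_openC (minimal_nbhd_symmetric_closed symN _ (open_minimal_nbhd p)).
  - exact: minimal_nbhd_id.
  - by move=> a Aa Npa; apply: (minimal_nbhd_sub (closed_openC cA) nAp Npa).
  - by rewrite setICr.
apply: contrapT => nNyx.
have cA : closed (~` N y) := open_closedC (open_minimal_nbhd y).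
have nAy : ~ (~` N y) y by apply; apply: minimal_nbhd_id.
have [U [V [oU oV Uy AV UV0]]] := regT _ _ cA nAy.
have : (U `&` V) y by split => //; exact: (minimal_nbhd_sub oV (AV _ nNyx) Nxy).
by rewrite UV0.
Qed.

End PrincipalSpace.

Theorem theorem2p1 (T : topologicalType) (hP : principal_space T) :
  (pre_hausdorff T <-> regular_paper T) /\
  (regular_paper T <-> dim_zero T) /\
  (dim_zero T <-> (forall U : set T, open U -> neg_open (neg_open U) = U)).
Proof.
rewrite -(propext (minimal_nbhd_symmetric_pre_hausdorff _ hP)).
rewrite -(propext (minimal_nbhd_symmetric_regular _ hP)).
rewrite -(propext (minimal_nbhd_symmetric_dim_zero _ hP)).
rewrite -(propext (minimal_nbhd_symmetric_neg_openK _ hP)).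
by split; [|split]; apply: iff_refl.
Qed.
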